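(* If $X\in\mathbf{M}_{2n}(\mathbb{C})$ satisfies $X^{\sharp}=X$, then there is a unitary $U\in\mathbf{M}_{2n}(\mathbb{C})$ with $U^{\sharp}=U$ and $X=U|X|$, where $|X|=(X^*X)^{1/2}$.
   Context: For $X\in\mathbf{M}_{2n}(\mathbb{C})$ in $n\times n$ blocks $X=\begin{bmatrix}A&B\\C&D\end{bmatrix}$, the dual operation is $X^{\sharp}=\begin{bmatrix}D^{\mathrm T}&-B^{\mathrm T}\\-C^{\mathrm T}&A^{\mathrm T}\end{bmatrix}$. $(X^*X)^{1/2}$ is the positive semidefinite square root. *)

From HB Require Import structures.
From mathcomp Require Import all_boot all_order all_algebra.
From mathcomp Require Import complex.
From mathcomp Require Import reals.
Set Implicit Arguments. Unset Strict Implicit. Unset Printing Implicit Defensive.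
Import Order.TTheory GRing.Theory Num.Theory.
Local Open Scope ring_scope.
Local Open Scope sesquilinear_scope.
Local Open Scope complex_scope.

Definition sharp {F : pzRingType} (n : nat) (X : 'M[F]_(n + n)) : 'M[F]_(n + n) :=
  block_mx (drsubmx X)^T (- (ursubmx X)^T)
           (- (dlsubmx X)^T) (ulsubmx X)^T.

Definition psdmx {C : numClosedFieldType} (m : nat) (P : 'M[C]_m) : Prop :=
  P ^t* = P /\ forall v : 'cV[C]_m, 0 <= (v ^t* *m P *m v) 0 0.

Definition is_psd_sqrt {C : numClosedFieldType} (m : nat) (P Q : 'M[C]_m) : Prop :=
  psdmx P /\ P *m P = Q.

From mathcomp Require Import all_boot all_order all_algebra.
From mathcomp Require Import complex.
From mathcomp Require Import reals.
Set Implicit Arguments. Unset Strict Implicit. Unset Printing Implicit Defensive.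
Import Order.TTheory GRing.Theory Num.Theory.
Local Open Scope ring_scope.
Local Open Scope sesquilinear_scope.

(* Write J = [0 1; -1 0], so that X^# = J X^T J^T, and let P^+ be the
   Moore-Penrose inverse of P = |X|.  Then X P^+ is a partial isometry from
   ran P onto ran X with (X P^+) P = X.  As X^T = J X J^T, the matrix X J is
   skew-symmetric, so rank X and dim ker X are even.  For an orthonormal basis B
   of ker X = ker P and a unitary skew-symmetric M, N = J conj(B) M B^* maps
   ker P isometrically onto conj(J ker X) = (ran X)^perp and satisfies
   N^# = N, so U = X P^+ + N is unitary with U P = X.  Finally U^# = U because
   (P^#)^2 X = X P^2, and on spectral decompositions this intertwining passes
   from the squares to the pseudo-inverses: (P^#)^+ X = X P^+. *)

Section Adjoint.
Variable C : numClosedFieldType.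

Lemma adjmxM m n p (A : 'M[C]_(m, n)) (B : 'M[C]_(n, p)) :
  (A *m B)^t* = B^t* *m A^t*.
Proof. by rewrite trmx_mul map_mxM. Qed.

Lemma adjmxD m n (A B : 'M[C]_(m, n)) : (A + B)^t* = A^t* + B^t*.
Proof. by rewrite linearD /= map_mxD. Qed.

Lemma adjmx_mul_self_eq0 m n (A : 'M[C]_(m, n)) : A^t* *m A = 0 -> A = 0.
Proof.
move=> /matrixP AA0; apply/matrixP => i j; move: (AA0 j j).
rewrite !mxE => /psumr_eq0P AA0j.
have /eqP : (A^t*) j i * A i j = 0.
  by apply: AA0j => // k _; rewrite !mxE mulrC -normCK exprn_ge0.
by rewrite !mxE mulf_eq0 conjC_eq0 orbb => /eqP.
Qed.

Lemma gram_mulmx_eq0 m p q r (A : 'M[C]_(p, m)) (B : 'M[C]_(q, m))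
    (Z : 'M[C]_(m, r)) :
  A^t* *m A = B^t* *m B -> A *m Z = 0 -> B *m Z = 0.
Proof.
move=> gramAB AZ0; apply: adjmx_mul_self_eq0.
by rewrite adjmxM -mulmxA (mulmxA _ B) -gramAB -mulmxA AZ0 !mulmx0.
Qed.

End Adjoint.

Lemma skew_mxrank_even (F : numFieldType) m (S : 'M[F]_m) :
  S^T = - S -> ~~ odd (\rank S).
Proof.
move=> ST.
set L := kermx S; set Co := row_base (L^C)%MS.
have <- : \rank (L^C)%MS = \rank S.
  by rewrite mxrank_compl mxrank_ker subKn // rank_leq_row.
have LS : L *m S = 0 := mulmx_ker S.
have CoE : (Co :=: L^C)%MS := eq_row_base _.
have Cofree : row_free Co := row_base_free _.
have subL p (z : 'M_(p, m)) : z *m S = 0 -> (z <= L)%MS.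
  by move=> zS; rewrite sub_kermx zS.
clearbody Co L.
(* The restriction of [S] to a complement of its kernel is nondegenerate. *)
set M := Co *m S *m Co^T.
have detM : \det M != 0.
  apply/det0P => -[x nz0 xM0].
  set y := x *m Co.
  have yS_Co : y *m S *m Co^T = 0 by move: xM0; rewrite /M /y !mulmxA.
  have yS_L : y *m S *m L^T = 0.
    apply: trmx_inj; rewrite !trmx_mul ST trmx0 trmxK mulNmx mulmxN mulmxA LS.
    by rewrite mul0mx oppr0.
  have yS : y *m S = 0.
    have : (1%:M <= L + Co)%MS.
      apply: submx_full; rewrite /row_full (adds_eqmx (eqmx_refl L) CoE).
      exact: addsmx_compl_full.
    case/sub_addsmxP => -[u1 u2] /= E1.
    rewrite -[y *m S]mulmx1 -trmx1 E1 linearD /= !trmx_mul mulmxDr !mulmxA.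
    by rewrite yS_Co yS_L !mul0mx addr0.
  have : (y <= L :&: L^C)%MS by rewrite sub_capmx subL //= -CoE submxMl.
  rewrite capmx_compl submx0 /y => /eqP xCo0.
  by move: nz0; rewrite -(row_free_inj Cofree (x1:=x) (x2:=0)) ?eqxx // mul0mx.
apply/negP => oddr; move: detM.
have MT : M^T = - M by rewrite /M !trmx_mul trmxK ST mulNmx mulmxN mulmxA.
have := det_tr M; rewrite MT -scaleN1r detZ -signr_odd oddr expr1 mulN1r.
move=> /eqP; rewrite eq_sym -subr_eq0 opprK -mulr2n mulrn_eq0 /= => /eqP ->.
by rewrite eqxx.
Qed.

Definition Jmx {R : pzRingType} (n : nat) : 'M[R]_(n + n) :=
  block_mx 0 1%:M (-1%:M) 0.

Section SymplecticForm.
Variables (R : pzRingType) (n : nat).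
Local Notation J := (@Jmx R n).

Lemma tr_Jmx : J^T = - J.
Proof.
rewrite /Jmx tr_block_mx !trmx0 trmx1 linearN /= trmx1 opp_block_mx.
by rewrite !oppr0 opprK.
Qed.

Lemma mulJmxJ : J *m J = - 1%:M.
Proof.
rewrite /Jmx mulmx_block !mul0mx !mulmx0 !mul1mx ?mulmxN !mulmx1 !add0r !addr0.
by rewrite [X in _ = - X]scalar_mx_block opp_block_mx !oppr0.
Qed.

Lemma mulJmx_tr : J *m J^T = 1%:M.
Proof. by rewrite tr_Jmx mulmxN mulJmxJ opprK. Qed.

Lemma mul_trJmx : J^T *m J = 1%:M.
Proof. by rewrite tr_Jmx mulNmx mulJmxJ opprK. Qed.

Lemma sharpE (X : 'M[R]_(n + n)) : sharp X = J *m X^T *m J^T.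
Proof.
rewrite tr_Jmx mulmxN /sharp -[in RHS](submxK X) tr_block_mx /Jmx !mulmx_block.
rewrite !mul0mx !mulmx0 !mul1mx !mulmxN !mulmx1 !mulNmx !mul1mx !add0r !addr0.
by rewrite opp_block_mx !opprK.
Qed.

Lemma sharpD (X Y : 'M[R]_(n + n)) : sharp (X + Y) = sharp X + sharp Y.
Proof. by rewrite !sharpE linearD /= mulmxDr mulmxDl. Qed.

End SymplecticForm.

Lemma sharpM (R : comPzRingType) n (X Y : 'M[R]_(n + n)) :
  sharp (X *m Y) = sharp Y *m sharp X.
Proof.
by rewrite !sharpE trmx_mul -!mulmxA (mulmxA (Jmx n)^T (Jmx n)) mul_trJmx mul1mx.
Qed.

Section SharpAdjoint.
Variables (C : numClosedFieldType) (n : nat).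
Local Notation J := (@Jmx C n).

Lemma conj_Jmx : J ^ Num.conj = J.
Proof. by rewrite /Jmx map_block_mx !map_mx0 map_mxN map_mx1. Qed.

Lemma adj_Jmx : J^t* = J^T.
Proof. by rewrite -map_trmx conj_Jmx. Qed.

Lemma Jmx_unitary : J \is unitarymx.
Proof. by apply/unitarymxP; rewrite adj_Jmx mulJmx_tr. Qed.

Lemma sharp_adj (X : 'M[C]_(n + n)) : sharp (X^t*) = (sharp X)^t*.
Proof.
by rewrite !sharpE !adjmxM adj_Jmx !trmxK map_trmx trmxK conj_Jmx mulmxA.
Qed.

Lemma sharp_unitary_diag (V : 'M[C]_(n + n)) : V \is unitarymx ->
  exists2 W : 'M[C]_(n + n), W \is unitarymx &
    forall e, sharp (V^t* *m diag_mx e *m V) = W^t* *m diag_mx e *m W.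
Proof.
move=> Vu; exists (map_mx Num.conj V *m J^T).
  by rewrite mul_unitarymx ?conjC_unitary ?trmx_unitary ?Jmx_unitary.
move=> e; rewrite adjmxM trmxK conj_Jmx map_trmx map_mxCK sharpE.
by rewrite !trmx_mul tr_diag_mx map_trmx trmxK !mulmxA.
Qed.

Lemma sharp_fixed_mxrank_even (X : 'M[C]_(n + n)) :
  sharp X = X -> ~~ odd (\rank X).
Proof.
move=> hX; have -> : \rank X = \rank (X *m J).
  by rewrite mxrankMfree // row_free_unit unitarymx_unit // Jmx_unitary.
have XT : X^T = J *m X *m J^T by rewrite -{1}hX sharpE !trmx_mul !trmxK mulmxA.
apply: skew_mxrank_even.
by rewrite trmx_mul XT !mulmxA mul_trJmx mul1mx tr_Jmx mulmxN.
Qed.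

End SharpAdjoint.

Lemma skew_unitary_exists (C : numClosedFieldType) k : ~~ odd k ->
  exists2 M : 'M[C]_k, M \is unitarymx & M^T = - M.
Proof.
move=> ek; rewrite -[k]odd_double_half (negbTE ek) add0n -addnn.
by exists (Jmx k./2); [exact: Jmx_unitary | exact: tr_Jmx].
Qed.

Section UnitaryDiagonal.
Variables (C : numClosedFieldType) (m : nat).
Implicit Types (V W Y : 'M[C]_m) (d e : 'rV[C]_m).

Lemma unitary_diag_mul V d e : V \is unitarymx ->
  V^t* *m diag_mx d *m V *m (V^t* *m diag_mx e *m V) =
  V^t* *m diag_mx (\row_j (d 0 j * e 0 j)) *m V.
Proof.
by move=> Vu; rewrite !mulmxA mulmxtVK // -(mulmxA (V^t*)) mulmx_diag.
Qed.

Lemma diag_sq_intertwine d e Y :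
  (forall i, 0 <= d 0 i) -> (forall j, 0 <= e 0 j) ->
  diag_mx d *m diag_mx d *m Y = Y *m diag_mx e *m diag_mx e ->
  diag_mx (map_mx GRing.inv d) *m Y = Y *m diag_mx (map_mx GRing.inv e).
Proof.
move=> d0 e0 /matrixP dYe; apply/matrixP => i j; move: (dYe i j).
rewrite mulmx_diag -mulmxA mulmx_diag !mul_diag_mx !mul_mx_diag !mxE.
have [->|Yij0] := eqVneq (Y i j) 0; first by rewrite !mulr0 !mul0r.
rewrite -!expr2 [Y i j * _ ^+ 2]mulrC => /(mulIf Yij0) /eqP.
by rewrite eqrXn2 // => /eqP ->; rewrite mulrC.
Qed.

Lemma unitary_diag_sq_intertwine V W d e Y :
  V \is unitarymx -> W \is unitarymx ->
  (forall i, 0 <= d 0 i) -> (forall j, 0 <= e 0 j) ->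
  W^t* *m diag_mx d *m W *m (W^t* *m diag_mx d *m W) *m Y =
    Y *m (V^t* *m diag_mx e *m V) *m (V^t* *m diag_mx e *m V) ->
  W^t* *m diag_mx (map_mx GRing.inv d) *m W *m Y =
    Y *m (V^t* *m diag_mx (map_mx GRing.inv e) *m V).
Proof.
move=> Vu Wu d0 e0.
have cancelWV Z1 Z2 : W^t* *m (Z1 *m V) = W^t* *m (Z2 *m V) -> Z1 = Z2.
  move/(congr1 (fun Z => W *m Z *m V^t*)).
  by rewrite !mulmxA (unitarymxP Wu) !mul1mx !(mulmxtVK _ Vu).
have -> : Y = W^t* *m (W *m Y *m V^t*) *m V.
  by rewrite !mulmxA (mulmx1C (unitarymxP Wu)) mul1mx mulmxKtV.
move: (W *m Y *m V^t*) => Y'.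
rewrite !mulmxA !(mulmxtVK _ Wu) !(mulmxtVK _ Vu) -!(mulmxA (W^t*)).
by move=> /cancelWV /(diag_sq_intertwine d0 e0) ->.
Qed.

End UnitaryDiagonal.

Section SpectralPseudoInverse.
Variables (C : numClosedFieldType) (m : nat).
Implicit Types P : 'M[C]_m.

(* The Moore-Penrose inverse of a normal matrix: the convention [0^-1 = 0]
   inverts exactly the nonzero eigenvalues. *)
Definition spectral_pinv P :=
  (spectralmx P)^t* *m diag_mx (map_mx GRing.inv (spectral_diag P))
    *m spectralmx P.

Lemma normalmx_spectralE P : P \is normalmx ->
  P = (spectralmx P)^t* *m diag_mx (spectral_diag P) *m spectralmx P.
Proof. by move/orthomx_spectralP; rewrite invmx_unitary ?spectral_unitarymx. Qed.

Lemma psdmx_normal P : psdmx P -> P \is normalmx.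
Proof. by case=> Ph _; apply/normalmxP; rewrite Ph. Qed.

Lemma psdmx_unitary_diag_ge0 (V : 'M[C]_m) d :
  V \is unitarymx -> psdmx (V^t* *m diag_mx d *m V) -> forall i, 0 <= d 0 i.
Proof.
move=> Vu [_ psdVdV] i; move: (psdVdV (V^t* *m delta_mx i 0)).
have delta_adj : (delta_mx i 0 : 'cV[C]_m)^t* = delta_mx 0 i.
  by apply/matrixP => a b; rewrite !mxE rmorph_nat andbC.
rewrite adjmxM trmxCK delta_adj !mulmxA !(mulmxtVK _ Vu) -rowE -colE !mxE eqxx.
by rewrite mulr1n.
Qed.

Lemma psdmx_spectral_diag_ge0 P : psdmx P -> forall i, 0 <= spectral_diag P 0 i.
Proof.
move=> psdP; apply: psdmx_unitary_diag_ge0 (spectral_unitarymx P) _.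
by rewrite -normalmx_spectralE // psdmx_normal.
Qed.

Lemma spectral_pinvC P : P \is normalmx ->
  P *m spectral_pinv P = spectral_pinv P *m P.
Proof.
move/normalmx_spectralE => {1 4}->; have Vu := spectral_unitarymx P.
rewrite !unitary_diag_mul //; congr (_ *m diag_mx _ *m _).
by apply/rowP => j; rewrite !mxE mulrC.
Qed.

Lemma mul_spectral_pinvK P : P \is normalmx ->
  P *m spectral_pinv P *m P = P.
Proof.
move/normalmx_spectralE => PE; have Vu := spectral_unitarymx P.
rewrite {1 3}PE !unitary_diag_mul // [RHS]PE; congr (_ *m diag_mx _ *m _).
apply/rowP => j; rewrite !mxE; have [->|dj0] := eqVneq (spectral_diag P 0 j) 0.
  by rewrite !mul0r.
by rewrite mulfV // mul1r.
Qed.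

Lemma adj_spectral_pinv P : psdmx P -> (spectral_pinv P)^t* = spectral_pinv P.
Proof.
move=> psdP; rewrite /spectral_pinv !adjmxM trmxCK mulmxA; congr (_ *m _ *m _).
rewrite tr_diag_mx map_diag_mx; congr diag_mx; apply/rowP => j; rewrite !mxE.
by apply: conj_Creal; rewrite ger0_real // invr_ge0 psdmx_spectral_diag_ge0.
Qed.

End SpectralPseudoInverse.

Lemma ker_orthonormal_basis (C : numClosedFieldType) p m (A : 'M[C]_(p, m)) :
  exists k (B : 'M[C]_(m, k)), [/\ k = (m - \rank A)%N, B^t* *m B = 1%:M,
    A *m B = 0 & forall q (Z : 'M[C]_(m, q)), A *m Z = 0 -> B *m B^t* *m Z = Z].
Proof.
pose R := schmidt (row_base (kermx A^T)).
have Ru : R \is unitarymx := schmidt_unitarymx _ (rank_leq_col _).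
have RE : (R :=: kermx A^T)%MS.
  exact: eqmx_trans (eqmx_schmidt_free (row_base_free _)) (eq_row_base _).
exists (\rank (kermx A^T)), R^T; split.
- by rewrite mxrank_ker mxrank_tr.
- have := congr1 (map_mx Num.conj) (unitarymxP Ru).
  by rewrite map_mxM map_mx1 map_mxCK trmxK.
- have : (R <= kermx A^T)%MS by rewrite RE.
  rewrite sub_kermx => /eqP RA0; apply: trmx_inj.
  by rewrite trmx_mul trmxK RA0 trmx0.
move=> q Z AZ0; have : (Z^T <= R)%MS by rewrite RE sub_kermx -trmx_mul AZ0 trmx0.
case/submxP => D ZD; rewrite -[Z]trmxK ZD trmx_mul !mulmxA -(mulmxA R^T).
have := congr1 (map_mx Num.conj) (unitarymxP Ru).
by rewrite map_mxM map_mx1 map_mxCK trmxK => ->; rewrite mulmx1.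
Qed.

Lemma sharp_spectral_pinv_intertwine (C : numClosedFieldType) n
    (X P : 'M[C]_(n + n)) :
  sharp X = X -> psdmx P -> P *m P = X^t* *m X ->
  sharp (spectral_pinv P) *m X = X *m spectral_pinv P.
Proof.
move=> hX psdP PP; have Vu := spectral_unitarymx P.
have d0 := psdmx_spectral_diag_ge0 psdP.
have PE := normalmx_spectralE (psdmx_normal psdP).
have [W Wu sharpVW] := sharp_unitary_diag Vu.
rewrite /spectral_pinv sharpVW; apply: unitary_diag_sq_intertwine => //.
(* [(P^#)^2 X = (X^* X)^# X = X X^* X = X P^2] *)
rewrite -sharpVW -PE -sharpM PP sharpM sharp_adj hX.
by rewrite -!mulmxA PP.
Qed.

Section SharpKernelCompletion.
Variables (C : numClosedFieldType) (n k : nat).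
Variables (B : 'M[C]_(n + n, k)) (M : 'M[C]_k).

Definition sharp_completion := Jmx n *m map_mx Num.conj B *m M *m B^t*.

Lemma sharp_completion_fixed :
  M^T = - M -> sharp sharp_completion = sharp_completion.
Proof.
move=> MT; rewrite sharpE /sharp_completion !trmx_mul !map_trmx trmxK MT.
rewrite mulNmx !mulmxN mulNmx !mulmxA -(mulmxA _ (Jmx n)^T) -trmx_mul mulJmxJ.
by rewrite linearN /= trmx1 mulmxN mulmx1 opprK.
Qed.

Lemma adj_sharp_completion_mul : B^t* *m B = 1%:M -> M \is unitarymx ->
  sharp_completion^t* *m sharp_completion = B *m B^t*.
Proof.
move=> BB Mu; have BcBc : (map_mx Num.conj B)^t* *m map_mx Num.conj B = 1%:M.
  have := congr1 (map_mx Num.conj) BB; rewrite map_mxM map_mx1 map_mxCK => <-.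
  by rewrite map_trmx map_mxCK.
rewrite /sharp_completion !adjmxM trmxCK !mulmxA mulmxKtV ?Jmx_unitary //.
rewrite -(mulmxA _ _ (map_mx _ B)) BcBc mulmx1.
by rewrite -(mulmxA _ (M^t*)) (mulmx1C (unitarymxP Mu)) mulmx1.
Qed.

Lemma adj_mul_sharp_completion (X : 'M[C]_(n + n)) :
  sharp X = X -> X *m B = 0 -> X^t* *m sharp_completion = 0.
Proof.
move=> hX XB0; have XJ : X^T *m Jmx n = Jmx n *m X.
  by rewrite -{1}hX sharpE !trmx_mul !trmxK -!mulmxA mul_trJmx mulmx1.
have : map_mx Num.conj (X^T *m Jmx n *m B) = 0.
  by rewrite XJ -mulmxA XB0 mulmx0 map_mx0.
by rewrite !map_mxM conj_Jmx /sharp_completion !mulmxA => ->; rewrite !mul0mx.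
Qed.

Lemma sharp_completion_mul_eq0 (Z : 'M[C]_(n + n)) :
  Z^t* *m B = 0 -> sharp_completion *m Z = 0.
Proof.
move=> ZB0; rewrite /sharp_completion -mulmxA -[B^t* *m Z]trmxCK.
by rewrite adjmxM trmxCK ZB0 trmx0 map_mx0 mulmx0.
Qed.

End SharpKernelCompletion.

Section PolarPseudoInverse.
Variables (C : numClosedFieldType) (m : nat) (X P : 'M[C]_m).
Hypotheses (psdP : psdmx P) (PP : P *m P = X^t* *m X).
Local Notation Pp := (spectral_pinv P).

Let adjP : P^t* = P. Proof. by case: psdP. Qed.
Let gramXP : X^t* *m X = P^t* *m P. Proof. by rewrite adjP PP. Qed.
Let PPpC : P *m Pp = Pp *m P. Proof. exact/spectral_pinvC/psdmx_normal. Qed.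
Let PPpP : P *m Pp *m P = P. Proof. exact/mul_spectral_pinvK/psdmx_normal. Qed.

Lemma polar_pinv_isometry : (X *m Pp)^t* *m (X *m Pp) = Pp *m P.
Proof.
rewrite adjmxM adj_spectral_pinv // -mulmxA (mulmxA (X^t*)) -PP.
by rewrite -(mulmxA P) PPpC (mulmxA P Pp P) PPpP.
Qed.

Lemma polar_pinv_ker_eq0 : X *m (1%:M - Pp *m P) = 0.
Proof.
apply: gram_mulmx_eq0 (esym gramXP) _.
by rewrite mulmxBr mulmx1 mulmxA PPpP subrr.
Qed.

Lemma mul_polar_pinv : X *m Pp *m P = X.
Proof.
have := polar_pinv_ker_eq0; rewrite mulmxBr mulmx1 mulmxA => /eqP.
by rewrite subr_eq0 eq_sym => /eqP.
Qed.

Lemma ker_projector_pinv k (B : 'M[C]_(m, k)) :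
  B^t* *m B = 1%:M -> X *m B = 0 ->
  (forall Z : 'M[C]_m, X *m Z = 0 -> B *m B^t* *m Z = Z) ->
  B *m B^t* = 1%:M - Pp *m P.
Proof.
move=> BB XB0 Bproj; set E := 1%:M - Pp *m P.
have adjE : E^t* = E.
  rewrite /E linearB /= map_mxB trmx1 map_mx1 adjmxM adjP.
  by rewrite adj_spectral_pinv // PPpC.
have EB : E *m B = B.
  have PB0 : P *m B = 0 := gram_mulmx_eq0 gramXP XB0.
  by rewrite /E mulmxBl mul1mx -mulmxA PB0 mulmx0 subr0.
by rewrite -adjE -{1}(Bproj E polar_pinv_ker_eq0) !adjmxM adjE trmxCK mulmxA EB.
Qed.

End PolarPseudoInverse.

Theorem sharp_polar_decomposition (C : numClosedFieldType) n
    (X P : 'M[C]_(n + n)) :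
  sharp X = X -> psdmx P -> P *m P = X^t* *m X ->
  exists U : 'M[C]_(n + n), [/\ U \is unitarymx, sharp U = U & X = U *m P].
Proof.
move=> hX psdP PP.
have [k [B [kE BB XB0 Bproj]]] := ker_orthonormal_basis X.
have [M Mu MT] : exists2 M : 'M[C]_k, M \is unitarymx & M^T = - M.
  apply: skew_unitary_exists; rewrite kE oddB ?rank_leq_col //.
  by rewrite oddD addbb (negbTE (sharp_fixed_mxrank_even hX)).
have adjP : P^t* = P by case: psdP.
have PB0 : P^t* *m B = 0.
  by rewrite adjP; apply: gram_mulmx_eq0 XB0; rewrite adjP PP.
set N := sharp_completion B M.
have XN0 : X^t* *m N = 0 := adj_mul_sharp_completion M hX XB0.
exists (X *m spectral_pinv P + N); split.
- apply/unitarymxP/mulmx1C.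
  rewrite adjmxD mulmxDl !mulmxDr polar_pinv_isometry //.
  rewrite adj_sharp_completion_mul //.
  rewrite adjmxM -(mulmxA _ (X^t*)) XN0 mulmx0 addr0.
  rewrite mulmxA -[X]trmxCK -adjmxM XN0 trmx0 map_mx0 mul0mx add0r.
  rewrite (ker_projector_pinv psdP PP BB XB0) => [|Z]; last exact: Bproj.
  by rewrite addrC subrK.
- rewrite sharpD sharpM hX sharp_spectral_pinv_intertwine //.
  by rewrite sharp_completion_fixed.
- by rewrite mulmxDl mul_polar_pinv // sharp_completion_mul_eq0 // addr0.
Qed.

Theorem mainTheorem12 (R : realType) (n : nat) (X : 'M[R[i]]_(n + n)) :
  sharp X = X ->
  forall absX : 'M[R[i]]_(n + n), is_psd_sqrt absX (X ^t* *m X) ->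
  exists U : 'M[R[i]]_(n + n),
    [/\ U \is unitarymx, sharp U = U & X = U *m absX].
Proof. by move=> hX absX [psdX absX2]; exact: sharp_polar_decomposition. Qed.
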